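(* Let $X \sim \mathcal{N}(\mu,\sigma^2)$ be a single observation, with $\mu\in\mathbb{R}$ and $\sigma>0$ unknown, and for $c>1$ let $I_1(c) = (X - c|X|,\; X + c|X|)$. Then the coverage probability $P_{\mu,\sigma}(\mu \in I_1(c))$ depends on $(\mu,\sigma)$ only through $\lambda=\mu/\sigma$ and is an even function of $\lambda$. Writing $\lambda = |\mu|/\sigma \ge 0$, it equals $$P_1(\lambda,c) = \Phi\Big(\frac{c}{c+1}\lambda\Big) + 1 - \Phi\Big(\frac{c}{c-1}\lambda\Big).$$ Over $\lambda\ge 0$, $P_1(\lambda,c)$ is minimized at $$\lambda^*(c) = \frac{c^2-1}{\sqrt{2}\,c^{3/2}}\sqrt{\log\frac{c+1}{c-1}}.$$ Consequently, for every $\alpha$ with $0<\alpha<1/2$ there exists a constant $c=c(\alpha)>1$ such that $\inf_{\mu\in\mathbb{R},\sigma>0} P_{\mu,\sigma}(\mu\in I_1(c(\alpha))) \ge 1-\alpha$.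
   Context: $\Phi$ denotes the standard normal cumulative distribution function. $I_1(c)$ is the (Abbott–Rosenblatt) interval centered at the single observation $X$ with half-length $c|X|$. *)

From HB Require Import structures.
From mathcomp Require Import all_boot all_order all_algebra.
From mathcomp Require Import all_classical all_reals all_analysis.
Set Implicit Arguments. Unset Strict Implicit. Unset Printing Implicit Defensive.
Import Order.TTheory GRing.Theory Num.Theory.
Local Open Scope classical_set_scope.
Local Open Scope ring_scope.

(* Standard normal CDF: Phi x = P(Z <= x), Z ~ N(0,1), via the library's
   normal probability measure (normal_prob m s has mean m, std. dev. s). *)
Definition Phi {R : realType} (x : R) : R :=
  fine (normal_prob 0 1 [set y : R | y <= x]).

Definition I1 {R : realType} (c X : R) : set R :=
  [set t : R | X - c * `|X| < t < X + c * `|X|].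

Definition coverage {R : realType} (mu sigma c : R) : \bar R :=
  normal_prob mu sigma [set X : R | mu \in I1 c X].

Definition P1 {R : realType} (lambda c : R) : R :=
  Phi (c / (c + 1) * lambda) + 1 - Phi (c / (c - 1) * lambda).

Definition lambda_star {R : realType} (c : R) : R :=
  (c ^+ 2 - 1) / (Num.sqrt 2 * powR c (3 / 2)) * Num.sqrt (ln ((c + 1) / (c - 1))).

From HB Require Import structures.
From mathcomp Require Import all_boot all_order all_algebra.
From mathcomp Require Import all_classical all_reals all_analysis.
From mathcomp Require Import ring lra measurable_realfun.
Import Order.TTheory GRing.Theory Num.Theory.
Import numFieldNormedType.Exports.
Local Open Scope classical_set_scope.
Local Open Scope ring_scope.

(* Writing X = mu + sigma Z, the event {mu \in I_1(c)} is the union of two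
   tails of Z, whose probabilities add up to P_1(|mu|/sigma, c) by the symmetry
   of Phi.  With a = c/(c+1) < b = c/(c-1), the derivative of lambda |-> P_1 is
   a phi(a lambda) - b phi(b lambda); comparing log-densities, it is <= 0
   exactly when (b^2 - a^2) lambda^2 <= 2 ln (b/a), i.e. when
   lambda <= lambda*(c), so lambda*(c) is the minimiser.  Finally the mean value
   theorem and t phi(t) <= 1/2 give Phi(b lambda) - Phi(a lambda)
   <= (b - a)/(2a) = 1/(c-1), so c(alpha) = 1 + 1/alpha works. *)

Lemma derive1_sign_change_min {R : realType} (f : R -> R) (x0 m l : R) :
  (forall x, derivable f x 1) -> x0 <= m -> x0 <= l ->
  (forall x, x0 < x < m -> f^`()%classic x <= 0) ->
  (forall x, m < x -> 0 <= f^`()%classic x) -> f m <= f l.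
Proof.
move=> df x0m x0l f'_le0 f'_ge0.
have f_cont (i : interval R) : {within [set` i], continuous f}.
  exact: derivable_within_continuous (fun x _ => df x).
have [lm|ml] := lerP l m.
- apply: (ler0_derive1_le_cc (a := l) (b := m)) => //.
  + move=> x; rewrite in_itv /= => /andP[lx xm].
    by apply: f'_le0; rewrite xm (le_lt_trans x0l).
  + by rewrite in_itv /= lexx lm.
  + by rewrite in_itv /= lexx lm.
- apply: (ger0_derive1_le_cc (a := m) (b := l)) => //.
  + by move=> x; rewrite in_itv /= => /andP[mx _]; apply: f'_ge0.
  + by rewrite in_itv /= lexx ltW.
  + by rewrite in_itv /= lexx ltW.
  + exact: ltW.
Qed.

Section standard_normal.
Context {R : realType}.
Local Notation phi := (normal_pdf (0 : R) 1).

Lemma normal_pdf_affine (m s z : R) : 0 < s ->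
  normal_pdf m s (s * z + m) * s = phi z.
Proof.
move=> s0; rewrite /normal_pdf gt_eqF// oner_eq0 /normal_peak /normal_fun.
rewrite addrK subr0 expr1n mul1r exprMn.
have -> : - (s ^+ 2 * z ^+ 2) / (s ^+ 2 *+ 2) = - z ^+ 2 / 2.
  by field; rewrite gt_eqF.
rewrite mulrAC; congr (_ * _).
rewrite -mulrnAr sqrtrM ?sqr_ge0// sqrtr_sqr gtr0_norm// invfM mulrAC.
by rewrite mulVf ?mul1r ?gt_eqF.
Qed.

Lemma normal_prob_Nyc_standard (m s x : R) : 0 < s ->
  normal_prob m s `]-oo, x] = normal_prob 0 1 `]-oo, (x - m) / s].
Proof.
move=> s0; pose F z := (z + m / s) * s.
have F'E : F^`()%classic = cst s.
  apply/funext => z; rewrite /F derive1E deriveM// deriveD// derive_cst.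
  by rewrite derive_id scaler0 add0r derive_cst addr0; exact: mulr1.
have {1}-> : x = F ((x - m) / s) by rewrite /F -mulrDl subrK divfK// gt_eqF.
rewrite /normal_prob increasing_ge0_integration_by_substitutionNy.
- apply: eq_integral => z _; rewrite F'E.
  change (EFin (normal_pdf m s (F z) * s) = EFin (phi z)).
  rewrite /F mulrDl divfK ?gt_eqF//.
  by rewrite (mulrC z s) normal_pdf_affine.
- by move=> u v _ _ uv; rewrite /F ltr_pM2r// ltrD2r.
- by rewrite F'E => u _; exact: cvg_cst.
- by rewrite F'E; exact: is_cvg_cst.
- by rewrite F'E; exact: cvg_cst.
- split=> //; apply: cvg_at_left_filter; exact: differentiable_continuous.
- by apply: gt0_cvgMlNy => //; exact: cvg_addrr_Ny.
- by apply: continuous_subspaceT; apply: continuous_normal_pdf; rewrite gt_eqF.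
- by move=> u _; apply: normal_pdf_ge0.
Qed.

Lemma normal_prob_Nyc_Phi (x : R) : normal_prob 0 1 `]-oo, x] = (Phi x)%:E.
Proof.
rewrite /Phi set_itvNyc fineK //; apply: fin_num_measure; rewrite -set_itvNyc.
exact: measurable_itv.
Qed.

Lemma normal_prob_Nyo (m s x : R) :
  normal_prob m s `]-oo, x[ = normal_prob m s `]-oo, x].
Proof.
rewrite /normal_prob integral_itv_bndo_bndc //.
apply/measurable_EFinP; apply: measurable_funTS; exact: measurable_normal_pdf.
Qed.

Lemma normal_prob_oy (m s x : R) :
  normal_prob m s `]x, +oo[ = (1 - normal_prob m s `]-oo, x])%E.
Proof. by rewrite -setCitvl probability_setC. Qed.

Lemma normal_pdf01N (x : R) : phi (- x) = phi x.
Proof. by rewrite /normal_pdf oner_eq0 /normal_fun !subr0 sqrrN. Qed.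

Lemma PhiN (t : R) : Phi (- t) = 1 - Phi t.
Proof.
apply: EFin_inj; rewrite EFinB -!normal_prob_Nyc_Phi -(normal_prob_Nyo _ _ t).
rewrite -probability_setC ?setCitvl; last exact: measurable_itv.
rewrite /normal_prob ge0_integration_by_substitutionNy.
- by apply: eq_integral => z _ /=; rewrite normal_pdf01N.
- apply: continuous_subspaceT.
  by apply: continuous_normal_pdf; rewrite oner_eq0.
- by move=> u _; apply: normal_pdf_ge0.
Qed.

Lemma normal_prob_two_tails (m s p q : R) : 0 < s -> p <= q ->
  normal_prob m s (`]-oo, p[ `|` `]q, +oo[) =
  (Phi ((p - m) / s) + (1 - Phi ((q - m) / s)))%:E.
Proof.
move=> s0 pq; rewrite measureU; first last.
- apply/seteqP; split => x //=; rewrite !in_itv /= andbT => -[xp qx].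
  by have := lt_le_trans xp pq; rewrite ltNge (ltW qx).
- exact: measurable_itv.
- exact: measurable_itv.
change (normal_prob m s `]-oo, p[ + normal_prob m s `]q, +oo[ =
  (Phi ((p - m) / s) + (1 - Phi ((q - m) / s)))%:E)%E.
rewrite normal_prob_Nyo normal_prob_oy (normal_prob_Nyc_standard _ _ p s0).
rewrite (normal_prob_Nyc_standard _ _ q s0).
by rewrite !normal_prob_Nyc_Phi EFinD EFinB.
Qed.

Lemma is_derive_Phi (x : R) : is_derive x 1 (@Phi R) (phi x).
Proof.
have PhiE : @Phi R = fun y =>
    (\int[lebesgue_measure]_(t in [set` Interval -oo%O (BRight y)]) phi t)%R.
  by apply/funext => y; rewrite /Phi set_itvNyc.
have int_phi : lebesgue_measure.-integrable
    [set` Interval -oo%O (BRight (x + 1))] (EFin \o phi).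
  apply: (integrableS measurableT _ (subsetT _)); first exact: measurable_itv.
  exact: integrable_normal_pdf.
have phi_cont : {for x, continuous phi}.
  by apply: continuous_normal_pdf; rewrite oner_eq0.
have x1 : x < x + 1 by rewrite ltrDl.
have [dPhi] := continuous_FTC1 x1 int_phi (ltNyr _) phi_cont.
by rewrite derive1E => <-; rewrite PhiE; exact: derivableP.
Qed.

Lemma normal_pdf01E (y : R) : phi y = normal_peak 1 * expR (- y ^+ 2 / 2).
Proof. by rewrite /normal_pdf oner_eq0 /normal_fun subr0 expr1n. Qed.

Lemma normal_peak1_gt0 : 0 < normal_peak (1 : R).
Proof. by apply: normal_peak_gt0; rewrite oner_eq0. Qed.

Lemma normal_peak1_le : normal_peak (1 : R) <= 2^-1.
Proof.
rewrite /normal_peak expr1n mul1r; set X := pi *+ 2.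
have X4 : 4 <= X by rewrite /X -mulr_natr; have := @pi_ge2 R; lra.
have sX : Num.sqrt X ^+ 2 = X by rewrite sqr_sqrtr // (le_trans _ X4).
have s2 : 2 <= Num.sqrt X by have := sqrtr_ge0 X; nra.
by rewrite lef_pV2 ?posrE // (lt_le_trans _ s2).
Qed.

Lemma mul_expR_le1 (t : R) : t * expR (- t ^+ 2 / 2) <= 1.
Proof.
rewrite mulNr expRN ler_pdivrMr ?expR_gt0 // mul1r.
have := expR_ge1Dx (t ^+ 2 / 2); nra.
Qed.

Lemma mul_normal_pdf01_le (t : R) : t * phi t <= 2^-1.
Proof.
rewrite normal_pdf01E mulrCA; apply: le_trans normal_peak1_le.
by rewrite -[leRHS]mulr1 ler_wpM2l ?mul_expR_le1 // ltW // normal_peak1_gt0.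
Qed.

Lemma normal_pdf01_le (x y : R) : 0 <= x <= y -> phi y <= phi x.
Proof.
move=> /andP[x0 xy]; rewrite !normal_pdf01E ler_pM2l ?normal_peak1_gt0//.
rewrite ler_expR ler_pM2r ?invr_gt0 // lerN2.
by rewrite ler_sqr ?nnegrE ?(le_trans x0 xy).
Qed.

Lemma Phi_sub_le (x y : R) : 0 <= x <= y -> Phi y - Phi x <= (y - x) * phi x.
Proof.
move=> /andP[x0 xy].
have Phi_cont : {within `[x, y], continuous (@Phi R)}.
  apply: derivable_within_continuous => z _.
  exact: (@ex_derive _ _ _ _ _ _ _ (is_derive_Phi z)).
have [z] := MVT_segment xy (fun z _ => is_derive_Phi z) Phi_cont.
rewrite in_itv /= => /andP[xz zy] ->; rewrite mulrC ler_wpM2l ?subr_ge0//.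
by rewrite normal_pdf01_le // x0.
Qed.

Lemma Phi_dilation_sub_le (a b l : R) : 0 < a <= b -> 0 <= l ->
  Phi (b * l) - Phi (a * l) <= (b - a) / (2 * a).
Proof.
move=> /andP[a0 ab] l0.
have al0 : 0 <= a * l <= b * l by apply/andP; split; nra.
apply: le_trans (Phi_sub_le _ _ al0) _.
have -> : (b * l - a * l) * phi (a * l) = (b - a) / a * (a * l * phi (a * l)).
  by field; rewrite gt_eqF.
have -> : (b - a) / (2 * a) = (b - a) / a * 2^-1 by field; rewrite gt_eqF.
apply: ler_wpM2l; last exact: mul_normal_pdf01_le.
by rewrite divr_ge0 ?subr_ge0 // ltW.
Qed.

Lemma is_derive_Phi_scale (k l : R) :
  is_derive l 1 (fun x => Phi (k * x)) (k * phi (k * l)).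
Proof.
have dk : is_derive l 1 ( *%R k) k.
  exact: is_derive_eq (is_deriveZ k (is_derive_id l 1)) (mulr1 k).
exact: is_derive_eq (is_derive1_comp (is_derive_Phi (k * l)) dk) (mulrC _ _).
Qed.

Lemma normal_pdf01_dilation_le (a b l : R) : 0 < a -> 0 < b ->
  (a * phi (a * l) <= b * phi (b * l)) =
  ((b ^+ 2 - a ^+ 2) * l ^+ 2 <= 2 * ln (b / a)).
Proof.
move=> a0 b0; rewrite !normal_pdf01E mulrCA [leRHS]mulrCA.
rewrite ler_pM2l ?normal_peak1_gt0//.
rewrite -{1}(lnK a0) -{1}(lnK b0) -!expRD ler_expR ln_div ?posrE//.
by apply/idP/idP => h; nra.
Qed.
End standard_normal.

Section coverage.
Context {R : realType}.
Local Notation phi := (normal_pdf (0 : R) 1).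

Lemma I1_event_le0 (c m : R) : 1 < c -> m <= 0 ->
  [set X | m \in I1 c X] = `]-oo, m / (c + 1)[ `|` `]- m / (c - 1), +oo[.
Proof.
move=> c1 m0; apply/seteqP; split => X /=;
  rewrite in_setE /I1 /= !in_itv /= andbT ltr_pdivlMr ?ltr_pdivrMr; try lra.
- have [X0|X0] := lerP 0 X; [rewrite ger0_norm // | rewrite ltr0_norm //];
    move=> /andP[h1 h2]; [right | left]; nra.
- have [X0|X0] := lerP 0 X; [rewrite ger0_norm // | rewrite ltr0_norm //];
    move=> [h|h]; apply/andP; split; nra.
Qed.

Lemma I1_event_gt0 (c m : R) : 1 < c -> 0 < m ->
  [set X | m \in I1 c X] = `]-oo, - m / (c - 1)[ `|` `]m / (c + 1), +oo[.
Proof.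
move=> c1 m0; apply/seteqP; split => X /=;
  rewrite in_setE /I1 /= !in_itv /= andbT ltr_pdivlMr ?ltr_pdivrMr; try lra.
- have [X0|X0] := lerP 0 X; [rewrite ger0_norm // | rewrite ltr0_norm //];
    move=> /andP[h1 h2]; [right | left]; nra.
- have [X0|X0] := lerP 0 X; [rewrite ger0_norm // | rewrite ltr0_norm //];
    move=> [h|h]; apply/andP; split; nra.
Qed.

Lemma coverage_P1 (c m s : R) : 1 < c -> 0 < s ->
  coverage m s c = (P1 (`|m| / s) c)%:E.
Proof.
move=> c1 s0; rewrite /coverage /P1; have [m0|m0] := lerP m 0.
- rewrite I1_event_le0 // normal_prob_two_tails //; last first.
    apply: (@le_trans _ _ 0); first by rewrite pmulr_lle0 // invr_gt0; lra.
    by rewrite divr_ge0 ?oppr_ge0 //; lra.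
  rewrite ler0_norm //.
  have -> : (m / (c + 1) - m) / s = c / (c + 1) * (- m / s) by field; lra.
  have -> : (- m / (c - 1) - m) / s = c / (c - 1) * (- m / s) by field; lra.
  by congr EFin; ring.
- rewrite I1_event_gt0 // normal_prob_two_tails //; last first.
    apply: (@le_trans _ _ 0); first by rewrite mulNr oppr_le0 divr_ge0 //; lra.
    by rewrite divr_ge0 //; lra.
  rewrite gtr0_norm //.
  have -> : (- m / (c - 1) - m) / s = - (c / (c - 1) * (m / s)) by field; lra.
  have -> : (m / (c + 1) - m) / s = - (c / (c + 1) * (m / s)) by field; lra.
  by rewrite !PhiN; congr EFin; ring.
Qed.
End coverage.

Section P1_minimum.
Context {R : realType}.
Local Notation phi := (normal_pdf (0 : R) 1).

Lemma is_derive_P1 (c l : R) : is_derive l 1 (P1 ^~ c)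
  (c / (c + 1) * phi (c / (c + 1) * l) - c / (c - 1) * phi (c / (c - 1) * l)).
Proof.
have := is_deriveB (is_deriveD (is_derive_Phi_scale (c / (c + 1)) l)
  (is_derive_cst (1 : R) l 1)) (is_derive_Phi_scale (c / (c - 1)) l).
by rewrite addr0.
Qed.

Lemma lambda_star_ge0 (c : R) : 1 < c -> 0 <= lambda_star c.
Proof.
move=> c1; rewrite /lambda_star mulr_ge0 ?sqrtr_ge0 //.
by rewrite divr_ge0 ?mulr_ge0 ?sqrtr_ge0 ?powR_ge0 //; nra.
Qed.

Lemma lambda_star_sqr (c : R) : 1 < c -> lambda_star c ^+ 2 =
  2 * ln ((c / (c - 1)) / (c / (c + 1))) /
  ((c / (c - 1)) ^+ 2 - (c / (c + 1)) ^+ 2).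
Proof.
move=> c1; have c0 : 0 <= c by lra.
have lnE : ln ((c + 1) / (c - 1)) = ln ((c / (c - 1)) / (c / (c + 1))).
  by congr ln; field; apply/andP; split; rewrite ?gt_eqF //; lra.
have pow32 : powR c (3 / 2) ^+ 2 = c ^+ 3.
  rewrite -powR_mulrn ?powR_ge0 // -powRrM -[2%:R]/2.
  have -> : 3 / 2 * 2 = 3%:R :> R by field.
  exact: powR_mulrn.
rewrite /lambda_star exprMn sqr_sqrtr; last first.
  by rewrite ln_ge0 // ler_pdivlMr; lra.
rewrite exprMn exprVn exprMn sqr_sqrtr // pow32 lnE.
by field; rewrite !gt_eqF ?exprn_gt0 //; nra.
Qed.

Lemma derive1_P1_le0 (c l : R) : 1 < c -> 0 <= l ->
  ((P1 ^~ c)^`()%classic l <= 0) = (l <= lambda_star c).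
Proof.
move=> c1 l0; set a := c / (c + 1); set b := c / (c - 1).
have a0 : 0 < a by rewrite divr_gt0 //; lra.
have b0 : 0 < b by rewrite divr_gt0 //; lra.
have ab : a < b by rewrite /a /b ltr_pM2l ?ltf_pV2 ?posrE; lra.
have dP1 := is_derive_P1 c l.
rewrite derive1E derive_val subr_le0 normal_pdf01_dilation_le //.
rewrite -(ler_sqr l0) ?nnegrE ?lambda_star_ge0 // lambda_star_sqr // -/a -/b.
have ba : 0 < b ^+ 2 - a ^+ 2 by nra.
by rewrite ler_pdivlMr // (mulrC (l ^+ 2)).
Qed.

Lemma P1_lambda_star_le (c l : R) : 1 < c -> 0 <= l ->
  P1 (lambda_star c) c <= P1 l c.
Proof.
move=> c1 l0; apply: (@derive1_sign_change_min _ (P1 ^~ c) 0).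
- by move=> x; exact: (@ex_derive _ _ _ _ _ _ _ (is_derive_P1 c x)).
- exact: lambda_star_ge0.
- done.
- by move=> x /andP[x0 xl]; rewrite derive1_P1_le0 // ltW.
- move=> x lx; have x0 : 0 <= x := le_trans (lambda_star_ge0 _ c1) (ltW lx).
  by apply: ltW; rewrite ltNge derive1_P1_le0 // -ltNge.
Qed.

Lemma P1_lower_bound (c l : R) : 1 < c -> 0 <= l -> 1 - (c - 1)^-1 <= P1 l c.
Proof.
move=> c1 l0; have ab : 0 < c / (c + 1) <= c / (c - 1).
  by rewrite divr_gt0 ?ler_pM2l ?lef_pV2 ?posrE; lra.
have := Phi_dilation_sub_le _ _ _ ab l0.
have -> : (c / (c - 1) - c / (c + 1)) / (2 * (c / (c + 1))) = (c - 1)^-1.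
  by field; rewrite !gt_eqF //; lra.
by rewrite /P1; lra.
Qed.
End P1_minimum.

Theorem corollary1 (R : realType) :
  (forall c : R, 1 < c ->
     (exists g : R -> \bar R,
        (forall l : R, g (- l) = g l) /\
        (forall mu sigma : R, 0 < sigma -> coverage mu sigma c = g (mu / sigma)))
     /\ (forall mu sigma : R, 0 < sigma ->
           coverage mu sigma c = (P1 (`|mu| / sigma) c)%:E)
     /\ 0 <= lambda_star c
     /\ (forall l : R, 0 <= l -> P1 (lambda_star c) c <= P1 l c))
  /\
  (forall alpha : R, 0 < alpha < 1 / 2 ->
     exists c : R, 1 < c /\
       (forall mu sigma : R, 0 < sigma ->
          ((1 - alpha)%:E <= coverage mu sigma c)%E)).
Proof.
split=> [c c1 | alpha /andP[alpha0 _]].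
- split; first exists (fun l => (P1 `|l| c)%:E).
    split=> [l | m s s0]; first by rewrite normrN.
    by rewrite coverage_P1 // normf_div (gtr0_norm s0).
  split=> [m s s0|]; first exact: coverage_P1.
  by split=> [|l l0]; [exact: lambda_star_ge0 | exact: P1_lambda_star_le].
- have c1 : 1 < 1 + alpha^-1 by rewrite ltrDl invr_gt0.
  exists (1 + alpha^-1); split=> // m s s0.
  rewrite coverage_P1 // lee_fin.
  apply: le_trans (P1_lower_bound _ _ c1 _); last by rewrite divr_ge0 // ltW.
  by rewrite addrAC subrr add0r invrK.
Qed.
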